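(* Let $(X,\tau)$ be a topological space with an operation $\gamma$ on $\tau$ and $A\subseteq X$. Then (1) $A$ is $\gamma^{*}$-semi-open if and only if $A\cap sbd_{\gamma^{*}}(A)=\emptyset$; (2) $A$ is $\gamma^{*}$-semi-closed if and only if $sbd_{\gamma^{*}}(A)\subseteq A$.
   Context: An operation on $\tau$ is a map $\gamma:\tau\to P(X)$, $V\mapsto V^\gamma$, with $V\subseteq V^\gamma$ for every $V\in\tau$. For $A\subseteq X$, $int_\gamma(A)=\{x\in A: \text{there is an open } N \text{ with } x\in N,\ N^\gamma\subseteq A\}$; $A$ is $\gamma$-open iff $A=int_\gamma(A)$. $cl_\gamma(A)$ is the set of $x\in X$ such that $U^\gamma\cap A\neq\emptyset$ for every open $U\ni x$. $A$ is $\gamma^{*}$-semi-open if there is a $\gamma$-open set $O$ with $O\subseteq A\subseteq cl_\gamma(O)$; $A$ is $\gamma^{*}$-semi-closed if $X-A$ is $\gamma^{*}$-semi-open. $scl_{\gamma^{*}}(A)$ is the intersection of all $\gamma^{*}$-semi-closed sets containing $A$; $sbd_{\gamma^{*}}(A)=scl_{\gamma^{*}}(A)\cap scl_{\gamma^{*}}(X-A)$. *)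

From HB Require Import structures.
From mathcomp Require Import all_boot all_order.
From mathcomp Require Import boolp classical_sets topology.
Set Implicit Arguments. Unset Strict Implicit. Unset Printing Implicit Defensive.
Local Open Scope classical_set_scope.

(* An operation gamma on tau is given
   as a function on sets; only its values on open sets are ever used, and the
   condition V ⊆ V^gamma for open V is an explicit hypothesis. *)
Definition is_operation (T : topologicalType) (gamma : set T -> set T) : Prop :=
  forall V : set T, open V -> V `<=` gamma V.

Section GammaDefs.
Context (T : topologicalType) (gamma : set T -> set T).

Definition int_gamma (A : set T) : set T :=
  [set x | A x /\ exists N : set T, [/\ open N, N x & gamma N `<=` A]].

Definition gamma_open (A : set T) : Prop := A = int_gamma A.

Definition cl_gamma (A : set T) : set T :=
  [set x | forall U : set T, open U -> U x -> gamma U `&` A !=set0].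

Definition gamma_semi_open (A : set T) : Prop :=
  exists O : set T, [/\ gamma_open O, O `<=` A & A `<=` cl_gamma O].

Definition gamma_semi_closed (A : set T) : Prop := gamma_semi_open (~` A).

Definition scl_gamma (A : set T) : set T :=
  \bigcap_(F in [set F | gamma_semi_closed F /\ A `<=` F]) F.

Definition sbd_gamma (A : set T) : set T :=
  scl_gamma A `&` scl_gamma (~` A).

End GammaDefs.

From mathcomp Require Import all_boot all_order.
From mathcomp Require Import boolp classical_sets topology.
Local Open Scope classical_set_scope.

(* γ*-semi-open sets are closed under arbitrary unions, so [scl_gamma A] is
   itself γ*-semi-closed and A is γ*-semi-closed exactly when it contains
   [scl_gamma A].  Since A ⊆ scl A, we get A ∩ sbd A = A ∩ scl (X - A), which
   is empty iff X - A is γ*-semi-closed, i.e. iff A is γ*-semi-open; and a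
   point of scl A outside A lies in scl (X - A), so sbd A ⊆ A iff scl A ⊆ A. *)

Section GammaSemiOpen.
Context (T : topologicalType) (gamma : set T -> set T).

Lemma gamma_open_bigcup (I : Type) (P : set I) (F : I -> set T) :
  (forall i, P i -> gamma_open gamma (F i)) ->
  gamma_open gamma (\bigcup_(i in P) F i).
Proof.
move=> hF; apply/seteqP; split; last by move=> x [].
move=> x [i Pi Fix]; split; first by exists i.
have [_ [N [oN Nx gNF]]] : int_gamma gamma (F i) x by rewrite -hF.
by exists N; split => // y /gNF Fiy; exists i.
Qed.

Lemma cl_gamma_subset (O O' : set T) :
  O `<=` O' -> cl_gamma gamma O `<=` cl_gamma gamma O'.
Proof.
move=> OO' x clOx U oU Ux; have [y [gUy Oy]] := clOx U oU Ux.
by exists y; split => //; apply: OO'.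
Qed.

Lemma gamma_semi_open_bigcup (I : Type) (P : set I) (F : I -> set T) :
  (forall i, P i -> gamma_semi_open gamma (F i)) ->
  gamma_semi_open gamma (\bigcup_(i in P) F i).
Proof.
move=> hF.
have /choice [O hO] : forall i, exists O, P i ->
    [/\ gamma_open gamma O, O `<=` F i & F i `<=` cl_gamma gamma O].
  move=> i; have [/hF [O hO]|nPi] := pselect (P i); first by exists O.
  by exists set0 => /nPi.
exists (\bigcup_(i in P) O i); split.
- by apply: gamma_open_bigcup => i /hO [].
- by move=> x [i Pi Oix]; exists i => //; have [_ + _] := hO i Pi; apply.
- move=> x [i Pi Fix]; have [_ _ /(_ x Fix)] := hO i Pi.
  by apply: cl_gamma_subset; apply: bigcup_sup.
Qed.

Lemma gamma_semi_openE (A : set T) :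
  gamma_semi_open gamma A <-> gamma_semi_closed gamma (~` A).
Proof. by rewrite /gamma_semi_closed setCK. Qed.

Lemma subset_scl_gamma (A : set T) : A `<=` scl_gamma gamma A.
Proof. by move=> x Ax F [_]; apply. Qed.

Lemma scl_gamma_semi_closed (A : set T) :
  gamma_semi_closed gamma (scl_gamma gamma A).
Proof.
rewrite /gamma_semi_closed /scl_gamma setC_bigcap.
by apply: gamma_semi_open_bigcup => F [].
Qed.

Lemma gamma_semi_closedP (A : set T) :
  gamma_semi_closed gamma A <-> scl_gamma gamma A `<=` A.
Proof.
split => [hA x|sclAA]; first by apply; split.
suff -> : A = scl_gamma gamma A by apply: scl_gamma_semi_closed.
by apply/seteqP; split; [apply: subset_scl_gamma|].
Qed.

Lemma setI_sbd_gamma (A : set T) :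
  A `&` sbd_gamma gamma A = A `&` scl_gamma gamma (~` A).
Proof. by rewrite /sbd_gamma setIA (setIidl (subset_scl_gamma A)). Qed.

Lemma sbd_gamma_subset (A : set T) :
  sbd_gamma gamma A `<=` A <-> scl_gamma gamma A `<=` A.
Proof.
split => [sbdA x sclAx|sclA x [sclAx _]]; last exact: sclA.
have [//|nAx] := pselect (A x).
by apply: sbdA; split => //; apply: subset_scl_gamma.
Qed.

End GammaSemiOpen.

Theorem theorem3p19 (T : topologicalType) (gamma : set T -> set T)
  (hgamma : is_operation gamma) (A : set T) :
  (gamma_semi_open gamma A <-> A `&` sbd_gamma gamma A = set0) /\
  (gamma_semi_closed gamma A <-> sbd_gamma gamma A `<=` A).
Proof.
split.
- rewrite gamma_semi_openE gamma_semi_closedP setI_sbd_gamma setIC.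
  by rewrite disjoints_subset.
- by rewrite gamma_semi_closedP sbd_gamma_subset.
Qed.
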